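(* Let $d\in\mathbb{N}$, $d\geq 2$, $L\geq 1$, $X\subseteq \mathbb{Z}^{d}$ and let $f\colon X\to \mathbb{R}^{d}$ be an $L$-bilipschitz mapping. Suppose that there exists $\lambda\geq 1$ such that $\mathbb{R}^{d}\subseteq \bigcup_{x\in X}\overline{B}(x,\lambda)$. Then there exists a bilipschitz extension $F\colon \mathbb{Z}^{d}\to\mathbb{R}^{d}$ of $f$ with \[\operatorname{Lip}(F)\leq 4\lambda L, \qquad \operatorname{Lip}(F^{-1})\leq 24\lambda^{2}L\sqrt{d}.\]
   Context: $\overline{B}(x,\lambda)$ is the closed Euclidean ball. $\operatorname{Lip}(g)=\sup_{x\neq y}\|g(y)-g(x)\|/\|y-x\|$. A mapping is $L$-bilipschitz if it is injective and both it and its inverse are $L$-Lipschitz. *)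

From mathcomp Require Import all_boot all_order all_algebra.
From mathcomp Require Import reals.
Set Implicit Arguments. Unset Strict Implicit. Unset Printing Implicit Defensive.
Import Order.TTheory GRing.Theory Num.Theory.
Local Open Scope ring_scope.

Definition enorm (R : realType) (d : nat) (v : 'rV[R]_d) : R :=
  Num.sqrt (\sum_(i < d) (v 0 i) ^+ 2).

Definition zemb (R : realType) (d : nat) (x : 'rV[int]_d) : 'rV[R]_d :=
  map_mx (fun z : int => z%:~R) x.

Definition zdist (R : realType) (d : nat) (x y : 'rV[int]_d) : R :=
  enorm (zemb R y - zemb R x).

Definition zlip_on (R : realType) (d : nat) (A : 'rV[int]_d -> Prop)
    (g : 'rV[int]_d -> 'rV[R]_d) (c : R) : Prop :=
  forall x y, A x -> A y -> enorm (g y - g x) <= c * zdist R x y.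

(* The inverse of g (on g(A)) is c-Lipschitz, i.e. Lip((g|A)^{-1}) <= c. *)
Definition zinvlip_on (R : realType) (d : nat) (A : 'rV[int]_d -> Prop)
    (g : 'rV[int]_d -> 'rV[R]_d) (c : R) : Prop :=
  forall x y, A x -> A y -> zdist R x y <= c * enorm (g y - g x).

Definition zbilip_on (R : realType) (d : nat) (A : 'rV[int]_d -> Prop)
    (g : 'rV[int]_d -> 'rV[R]_d) (L : R) : Prop :=
  (forall x y, A x -> A y -> g x = g y -> x = y) /\
  zlip_on A g L /\ zinvlip_on A g L.

From mathcomp Require Import all_boot all_order all_algebra.
From mathcomp Require Import reals.
From mathcomp Require Import ring lra.
From Stdlib Require Import ClassicalEpsilon.

(* Retract every lattice point z onto a point p z of X with |z - p z| <= lambda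
   (p is the identity on X) and put F z := f (p z) + delta (z - p z) with
   delta = 1 / (4 lambda L).  The perturbation has norm at most 1 / (4 L), which is
   small against the unit separation of distinct lattice points, so F is
   4 lambda L-Lipschitz.  If p z = p w then F w - F z = delta (w - z); otherwise
   |F w - F z| >= |f (p w) - f (p z)| - 1 / (2 L) >= |p w - p z| / (2 L), and
   |w - z| <= |p w - p z| + 2 lambda <= 3 lambda |p w - p z|.  Either way
   |w - z| <= 6 lambda L |F w - F z|, well within 24 lambda^2 L sqrt d. *)

Set Implicit Arguments.
Unset Strict Implicit.
Unset Printing Implicit Defensive.

Import Order.TTheory GRing.Theory Num.Theory.
Local Open Scope ring_scope.

Section EuclideanNorm.
Variables (R : realType) (d : nat).
Implicit Types (u v : 'rV[R]_d) (a b : 'I_d -> R).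

Lemma enorm_ge0 v : 0 <= enorm v.
Proof. exact: sqrtr_ge0. Qed.

Lemma enormZ c v : enorm (c *: v) = `|c| * enorm v.
Proof.
rewrite /enorm; under eq_bigr do rewrite mxE exprMn.
by rewrite -mulr_sumr sqrtrM ?sqr_ge0 // sqrtr_sqr.
Qed.

Lemma enormN v : enorm (- v) = enorm v.
Proof. by rewrite -scaleN1r enormZ normrN1 mul1r. Qed.

Lemma enorm0 : enorm (0 : 'rV[R]_d) = 0.
Proof. by rewrite -(scale0r 0) enormZ normr0 mul0r. Qed.

Lemma sumr_sqr_eq0 a : \sum_i a i ^+ 2 = 0 -> forall i, a i = 0.
Proof.
move=> /psumr_eq0P eq0 i; apply/eqP.
by rewrite -sqrf_eq0 eq0 // => j _; exact: sqr_ge0.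
Qed.

Lemma enorm_eq0 v : enorm v = 0 -> v = 0.
Proof.
move=> /eqP; rewrite sqrtr_eq0 => le0.
have /sumr_sqr_eq0 v0 : \sum_i v 0 i ^+ 2 = 0.
  by apply/eqP; rewrite eq_le le0 sumr_ge0 // => i _; exact: sqr_ge0.
by apply/rowP => i; rewrite v0 mxE.
Qed.

Lemma cauchy_schwarz a b :
  (\sum_i a i * b i) ^+ 2 <= (\sum_i a i ^+ 2) * (\sum_i b i ^+ 2).
Proof.
set S := \sum_i a i * b i; set A := \sum_i a i ^+ 2; set B := \sum_i b i ^+ 2.
have B_ge0 : 0 <= B by apply: sumr_ge0 => i _; exact: sqr_ge0.
have gram : B * (A * B - S ^+ 2) = \sum_i (B * a i - S * b i) ^+ 2.
  rewrite (eq_bigr (fun i => B ^+ 2 * a i ^+ 2 - 2 * B * S * (a i * b i)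
                            + S ^+ 2 * b i ^+ 2)); last by move=> i _; ring.
  by rewrite big_split sumrB /= -!mulr_sumr -/A -/B -/S; ring.
have [B0 | B_neq0] := eqVneq B 0.
  have S0 : S = 0 by rewrite /S big1 // => i _; rewrite (sumr_sqr_eq0 B0) mulr0.
  by rewrite S0 B0 expr0n mulr0.
have : 0 <= B * (A * B - S ^+ 2).
  by rewrite gram sumr_ge0 // => i _; exact: sqr_ge0.
by rewrite pmulr_rge0 ?lt_def ?B_neq0 // subr_ge0.
Qed.

Lemma enormD u v : enorm (u + v) <= enorm u + enorm v.
Proof.
rewrite /enorm; set A := \sum_i u 0 i ^+ 2; set B := \sum_i v 0 i ^+ 2.
have A_ge0 : 0 <= A by apply: sumr_ge0 => i _; exact: sqr_ge0.
have B_ge0 : 0 <= B by apply: sumr_ge0 => i _; exact: sqr_ge0.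
have -> : \sum_i (u + v) 0 i ^+ 2 = A + 2 * (\sum_i u 0 i * v 0 i) + B.
  by rewrite mulr_sumr -!big_split /=; apply: eq_bigr => i _; rewrite !mxE; ring.
have cs : \sum_i u 0 i * v 0 i <= Num.sqrt A * Num.sqrt B.
  rewrite -sqrtrM // (le_trans (ler_norm _)) // -sqrtr_sqr.
  by rewrite ler_wsqrtr // cauchy_schwarz.
rewrite -(ger0_norm (addr_ge0 (sqrtr_ge0 A) (sqrtr_ge0 B))) -sqrtr_sqr.
by rewrite ler_wsqrtr // sqrrD !sqr_sqrtr //; lra.
Qed.

Lemma lerB_enormD u v : enorm u - enorm v <= enorm (u + v).
Proof.
by rewrite lerBlDr; have := enormD (u + v) (- v); rewrite addrK enormN.
Qed.

End EuclideanNorm.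

Section LatticeDistance.
Variables (R : realType) (d : nat).
Implicit Types (x y : 'rV[int]_d) (g : 'rV[int]_d -> 'rV[R]_d).

Lemma zembB x y : zemb R y - zemb R x = zemb R (y - x).
Proof. by apply/rowP => i; rewrite !mxE rmorphB. Qed.

Lemma zemb_inj : injective (@zemb R d).
Proof.
by move=> x y /rowP eq_xy; apply/rowP => i; have := eq_xy i; rewrite !mxE => /intr_inj.
Qed.

Lemma zdist_ge0 x y : 0 <= zdist R x y.
Proof. exact: enorm_ge0. Qed.

Lemma zdist_eq0 x y : zdist R x y = 0 -> x = y.
Proof. by move/enorm_eq0/eqP; rewrite subr_eq0 => /eqP/zemb_inj. Qed.

Lemma zdist_ge1 x y : x != y -> 1 <= zdist R x y.
Proof.
move=> neq_xy; have [j neq_j] : exists j, x 0 j != y 0 j.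
  apply/existsP; apply: contraR neq_xy => /existsPn eq_xy.
  by apply/eqP/rowP => j; apply/eqP; rewrite -[_ == _]negbK eq_xy.
rewrite /zdist zembB /enorm -sqrtr1 ler_wsqrtr // (bigD1 j) //= -[1]addr0.
rewrite lerD ?sumr_ge0 // => [|i _]; last exact: sqr_ge0.
by rewrite !mxE sqr_intr_ge1 ?intr_int // intr_eq0 subr_eq0 eq_sym.
Qed.

Lemma zinvlip_injective g c : zinvlip_on (fun _ => True) g c -> injective g.
Proof.
move=> g_invlip x y eq_g; apply/zdist_eq0/eqP.
by rewrite eq_le zdist_ge0 andbT (le_trans (g_invlip x y I I)) // eq_g subrr enorm0 mulr0.
Qed.

Lemma zinvlip_le A g c c' : c <= c' -> zinvlip_on A g c -> zinvlip_on A g c'.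
Proof.
move=> le_c g_invlip x y Ax Ay; apply: le_trans (g_invlip x y Ax Ay) _.
by rewrite ler_wpM2r // enorm_ge0.
Qed.

End LatticeDistance.

Lemma exists_lattice_retraction (R : realType) (d : nat) (lambda : R)
    (X : 'rV[int]_d -> Prop) :
  0 <= lambda ->
  (forall q : 'rV[R]_d, exists x, X x /\ enorm (q - zemb R x) <= lambda) ->
  exists p : 'rV[int]_d -> 'rV[int]_d,
    forall z, [/\ X (p z), zdist R (p z) z <= lambda & (X z -> p z = z)].
Proof.
move=> lambda_ge0 cover.
apply: (choice (fun z x => [/\ X x, zdist R x z <= lambda & (X z -> x = z)])) => z.
have [Xz | notXz] := classic (X z).
  by exists z; split=> //; rewrite /zdist subrr enorm0.
by have [x [Xx near_x]] := cover (zemb R z); exists x.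
Qed.

Section Extension.
Variables (R : realType) (d : nat) (L lambda : R).
Variables (X : 'rV[int]_d -> Prop) (f : 'rV[int]_d -> 'rV[R]_d).
Variable p : 'rV[int]_d -> 'rV[int]_d.
Hypotheses (L_ge1 : 1 <= L) (lambda_ge1 : 1 <= lambda).
Hypotheses (f_lip : zlip_on X f L) (f_invlip : zinvlip_on X f L).
Hypotheses (pX : forall z, X (p z)) (p_near : forall z, zdist R (p z) z <= lambda).

Let delta := (4 * lambda * L)^-1.

Definition offset z := zemb R z - zemb R (p z).

Definition bilip_ext z := f (p z) + delta *: offset z.

Lemma bilip_ext_id x : p x = x -> bilip_ext x = f x.
Proof. by move=> px; rewrite /bilip_ext /offset px subrr scaler0 addr0. Qed.

Lemma bilip_extB z w :
  bilip_ext w - bilip_ext z = (f (p w) - f (p z)) + delta *: (offset w - offset z).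
Proof. by rewrite /bilip_ext [in RHS]scalerBr opprD addrACA. Qed.

Lemma zemb_offsetB z w :
  zemb R w - zemb R z = (zemb R (p w) - zemb R (p z)) + (offset w - offset z).
Proof. by apply/rowP => i; rewrite !mxE; ring. Qed.

Lemma enorm_offsetB z w : enorm (offset w - offset z) <= 2 * lambda.
Proof.
apply: le_trans (enormD _ _) _; rewrite enormN.
by have := p_near w; have := p_near z; rewrite /zdist /offset; lra.
Qed.

Lemma zdist_retract_le z w : zdist R (p z) (p w) <= zdist R z w + 2 * lambda.
Proof.
rewrite /zdist [in X in _ <= X]zemb_offsetB -[X in enorm X](addrK (offset w - offset z)).
by apply: le_trans (enormD _ _) _; rewrite enormN lerD2l enorm_offsetB.
Qed.

Lemma zdist_le_retract z w : zdist R z w <= zdist R (p z) (p w) + 2 * lambda.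
Proof.
by rewrite /zdist zemb_offsetB; apply: le_trans (enormD _ _) _; rewrite lerD2l enorm_offsetB.
Qed.

Let delta_gt0 : 0 < delta.
Proof. by rewrite invr_gt0 !mulr_gt0 // (lt_le_trans ltr01). Qed.

Let delta_mul : delta * (4 * lambda * L) = 1.
Proof. by rewrite mulVf // -invr_eq0 gt_eqF // delta_gt0. Qed.

Lemma bilip_ext_lip : zlip_on (fun _ => True) bilip_ext (4 * lambda * L).
Proof.
move=> z w _ _; have [<- | neq_zw] := eqVneq z w.
  by rewrite subrr enorm0 mulr_ge0 ?zdist_ge0 // ltW // -invr_gt0 delta_gt0.
have upper : enorm (bilip_ext w - bilip_ext z)
             <= L * (zdist R z w + 2 * lambda) + delta * (2 * lambda).
  rewrite bilip_extB; apply: le_trans (enormD _ _) _; apply: lerD.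
    apply: le_trans (f_lip (pX z) (pX w)) _.
    by rewrite ler_wpM2l ?zdist_retract_le // (le_trans ler01).
  by rewrite enormZ gtr0_norm ?delta_gt0 // ler_wpM2l ?enorm_offsetB // ltW ?delta_gt0.
apply: le_trans upper _; have := zdist_ge1 R neq_zw; set D := zdist R z w.
(* [lra] ignores section hypotheses, hence they are moved to the goal first. *)
move: L_ge1 lambda_ge1 delta_gt0 delta_mul => L1 l1 d0 dM D_ge1.
(* The three summands are at most [lambda L D], [2 lambda L D] and [lambda L D / 2]. *)
have LD_le : L * D <= lambda * (L * D) by rewrite ler_peMl // mulr_ge0 //; lra.
have lamL_le : lambda * L <= lambda * L * D by rewrite ler_peMr // mulr_ge0 //; lra.
have dlam_le : delta * lambda <= delta * lambda * L by rewrite ler_peMr // mulr_ge0 //; lra.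
nra.
Qed.

Lemma bilip_ext_invlip : zinvlip_on (fun _ => True) bilip_ext (6 * lambda * L).
Proof.
move=> z w _ _; have [eq_p | neq_p] := eqVneq (p z) (p w).
  have -> : bilip_ext w - bilip_ext z = delta *: (zemb R w - zemb R z).
    by rewrite bilip_extB eq_p subrr add0r /offset eq_p opprB addrA subrK.
  rewrite enormZ gtr0_norm ?delta_gt0 //.
  by move: (zdist_ge0 R z w) delta_mul; rewrite /zdist; nra.
have lower : enorm (f (p w) - f (p z)) - delta * (2 * lambda)
             <= enorm (bilip_ext w - bilip_ext z).
  rewrite bilip_extB; apply: le_trans (lerB_enormD _ _).
  by rewrite enormZ gtr0_norm ?delta_gt0 // lerB // ler_wpM2l ?enorm_offsetB // ltW ?delta_gt0.
move: (zdist_le_retract z w) (zdist_ge1 R neq_p) (f_invlip (pX z) (pX w)) lower.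
set D := zdist R z w; set E := zdist R _ _; set N := enorm (f _ - _); set NF := enorm _.
move: L_ge1 lambda_ge1 delta_mul => L1 l1 dM D_le E_ge1 E_le N_le.
have E_le2 : E <= 2 * (L * NF).
  have : L * (N - delta * (2 * lambda)) <= L * NF by rewrite ler_wpM2l //; lra.
  nra.
have : E + 2 * lambda <= 3 * lambda * E by nra.
nra.
Qed.

End Extension.

Theorem lemma4p2 (R : realType) (d : nat) (L lambda : R)
    (X : 'rV[int]_d -> Prop) (f : 'rV[int]_d -> 'rV[R]_d) :
  (2 <= d)%N -> 1 <= L ->
  zbilip_on X f L ->
  1 <= lambda ->
  (forall p : 'rV[R]_d, exists x, X x /\ enorm (p - zemb R x) <= lambda) ->
  exists F : 'rV[int]_d -> 'rV[R]_d,
    (forall x, X x -> F x = f x) /\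
    injective F /\
    zlip_on (fun _ => True) F (4 * lambda * L) /\
    zinvlip_on (fun _ => True) F (24 * lambda ^+ 2 * L * Num.sqrt d%:R).
Proof.
move=> d_ge2 L_ge1 [_ [f_lip f_invlip]] lambda_ge1 cover.
have [p p_retract] := exists_lattice_retraction (le_trans ler01 lambda_ge1) cover.
have pX z : X (p z) by case: (p_retract z).
have p_near z : zdist R (p z) z <= lambda by case: (p_retract z).
have F_invlip := bilip_ext_invlip L_ge1 lambda_ge1 f_invlip pX p_near.
have sqrt_d_ge1 : 1 <= Num.sqrt (d%:R : R).
  by rewrite -[X in X <= _]sqrtr1 ler_wsqrtr // ler1n (leq_trans _ d_ge2).
exists (bilip_ext L lambda f p); split; [|split; [|split]].
- by move=> x Xx; apply: bilip_ext_id; case: (p_retract x) => _ _ ->.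
- exact: zinvlip_injective F_invlip.
- exact: bilip_ext_lip L_ge1 lambda_ge1 f_lip pX p_near.
- apply: zinvlip_le F_invlip.
  have : 0 <= lambda * (lambda * (Num.sqrt d%:R - 1)) + lambda * (lambda - 1).
    by rewrite addr_ge0 // !mulr_ge0 ?subr_ge0 //; lra.
  nra.
Qed.
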